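(* $\lim_{k\to\infty,\ k\text{ odd}}p_k^\star=\frac12$.
   Context: For odd $k\ge3$, $p,x\in[0,1]$: $F_{p,k}(x)=\Pr[\mathrm{Bin}(k,(1-p)x)\ge(k+1)/2]$. $p_k^\star\in[1/9,1/2)$ is the (unique) value such that for $0\le p<p_k^\star$ the equation $F_{p,k}(x)=x$ on $[0,1]$ has exactly three solutions, for $p=p_k^\star$ exactly two, and for $p>p_k^\star$ its only solution is $0$. *)

From Stdlib Require Import Reals List Arith.
Open Scope R_scope.

(* F_{p,k}(x) = Pr[Bin(k,(1-p)x) >= (k+1)/2]
   = sum_{j=(k+1)/2}^{k} C(k,j) q^j (1-q)^(k-j),  q = (1-p) x. *)
Definition F (p : R) (k : nat) (x : R) : R :=
  let q := (1 - p) * x in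
  sum_f_R0 (fun j => if Nat.leb ((k + 1) / 2) j
                     then C k j * q ^ j * (1 - q) ^ (k - j) else 0) k.

Definition exactly_n_solutions (p : R) (k n : nat) : Prop :=
  exists l : list R, NoDup l /\ length l = n /\
    forall x, In x l <-> (0 <= x <= 1 /\ F p k x = x).

Definition is_pstar (k : nat) (ps : R) : Prop :=
  0 <= ps <= 1 /\
  (forall p, 0 <= p < ps -> exactly_n_solutions p k 3) /\
  exactly_n_solutions ps k 2 /\
  (forall p, ps < p <= 1 -> forall x, 0 <= x <= 1 -> F p k x = x -> x = 0).

(** For [q = (1-p) x], [F p k x] is the probability that [Bin(k, q)] reaches the
    majority threshold [(k+1)/2], so Chebyshev's inequality (variance [k q (1-q)])
    controls it once [k q] is at distance of order [k d] from the threshold.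
    For [p = 1/2 + d] we get [F p k x <= x / (2 k d^2) < x] on [(0, 1]] once
    [k d^2 >= 1]: there is no positive fixed point, hence [p_k^* <= 1/2 + d].
    For [p = 1/2 - d] we get [F p k x >= x] at [x = 1 - d/2] once [k d^3 >= 8],
    while [F p k 1 <= 1]; the intermediate value theorem gives a positive fixed
    point, hence [p_k^* >= 1/2 - d]. *)

From Stdlib Require Import Reals Arith List Lra Lia.
Open Scope R_scope.

(* Pascal's triangle; unlike Stdlib's [C n j], it vanishes for [j > n]. *)
Fixpoint binom (n j : nat) : R :=
  match n, j with
  | O, O => 1
  | O, S _ => 0
  | S _, O => 1
  | S n', S j' => binom n' j' + binom n' (S j')
  end.

Lemma binom_gt n j : (n < j)%nat -> binom n j = 0.
Proof.
  revert j; induction n as [|n IHn]; intros [|j] Hj; simpl; try lia; auto.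
  rewrite !IHn by lia; ring.
Qed.

Lemma binom_0 n : binom n 0 = 1.
Proof. destruct n; reflexivity. Qed.

Lemma binom_diag n : binom n n = 1.
Proof. induction n as [|n IHn]; simpl; auto. rewrite IHn, binom_gt by lia; ring. Qed.

Lemma binom_ge0 n j : 0 <= binom n j.
Proof.
  revert j; induction n as [|n IHn]; intros [|j]; simpl; try lra.
  pose proof (IHn j); pose proof (IHn (S j)); lra.
Qed.

Lemma C_binom n j : (j <= n)%nat -> C n j = binom n j.
Proof.
  assert (C_n_0 : forall n, C n 0 = 1).
  { intros m; unfold C; rewrite Nat.sub_0_r; simpl; field; apply INR_fact_neq_0. }
  revert j; induction n as [|n IHn]; intros [|j] Hj; try lia; try apply C_n_0.
  simpl. destruct (Nat.eq_dec j n) as [->|Hjn].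
  - rewrite pascal_step1, Nat.sub_diag, C_n_0, binom_diag, binom_gt by lia; ring.
  - rewrite <- pascal, !IHn by lia; reflexivity.
Qed.

Definition binom_expect (k : nat) (q : R) (f : nat -> R) : R :=
  sum_f_R0 (fun j => binom k j * q ^ j * (1 - q) ^ (k - j) * f j) k.

Lemma binom_expect_ext k q f g :
  (forall j, (j <= k)%nat -> f j = g j) -> binom_expect k q f = binom_expect k q g.
Proof. intros Hfg; apply sum_eq; intros j Hj; rewrite Hfg by exact Hj; reflexivity. Qed.

Lemma binom_expect_le k q f g : 0 <= q <= 1 ->
  (forall j, (j <= k)%nat -> f j <= g j) -> binom_expect k q f <= binom_expect k q g.
Proof.
  intros Hq Hfg; apply sum_Rle; intros j Hj.
  apply Rmult_le_compat_l; [|exact (Hfg j Hj)].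
  pose proof (binom_ge0 k j).
  pose proof (pow_le q j ltac:(lra)); pose proof (pow_le (1 - q) (k - j) ltac:(lra)).
  apply Rmult_le_pos; [apply Rmult_le_pos|]; assumption.
Qed.

Lemma binom_expect_scal k q c f :
  binom_expect k q (fun j => c * f j) = c * binom_expect k q f.
Proof. unfold binom_expect; rewrite scal_sum; apply sum_eq; intros; ring. Qed.

Lemma binom_expect_minus k q f g :
  binom_expect k q (fun j => f j - g j) = binom_expect k q f - binom_expect k q g.
Proof. unfold binom_expect; rewrite <- minus_sum; apply sum_eq; intros; ring. Qed.

Lemma binom_expect_S k q f :
  binom_expect (S k) q f =
  q * binom_expect k q (fun j => f (S j)) + (1 - q) * binom_expect k q f.
Proof.
  (* [binom k (S k) = 0] lets the sum defining [binom_expect k q f] run up to [S k]. *)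
  assert (Hshift : (1 - q) * binom_expect k q f =
    sum_f_R0 (fun j => binom k j * q ^ j * (1 - q) ^ (S k - j) * f j) (S k)).
  { unfold binom_expect; rewrite tech5, (binom_gt k (S k)), scal_sum by lia.
    rewrite !Rmult_0_l, Rplus_0_r; apply sum_eq; intros j Hj.
    replace (S k - j)%nat with (S (k - j)) by lia; simpl; ring. }
  rewrite Hshift; unfold binom_expect at 1.
  rewrite !(decomp_sum _ (S k)) by lia; simpl pred.
  rewrite (sum_eq _ (fun j => binom k j * q ^ j * (1 - q) ^ (k - j) * f (S j) * q
                     + binom k (S j) * q ^ S j * (1 - q) ^ (S k - S j) * f (S j))).
  - rewrite plus_sum, <- scal_sum, !binom_0; unfold binom_expect; ring.
  - intros j Hj; simpl binom; replace (S k - S j)%nat with (k - j)%nat by lia; simpl; ring.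
Qed.

Lemma binom_expect_1 k q : binom_expect k q (fun _ => 1) = 1.
Proof.
  induction k as [|k IHk]; [unfold binom_expect; simpl; ring|].
  rewrite binom_expect_S, IHk; ring.
Qed.

Lemma binom_expect_sq_dev k q c :
  binom_expect k q (fun j => (INR j - c) ^ 2) = INR k * q * (1 - q) + (INR k * q - c) ^ 2.
Proof.
  revert c; induction k as [|k IHk]; intros c; [unfold binom_expect; simpl; ring|].
  rewrite binom_expect_S, IHk.
  rewrite (binom_expect_ext k q _ (fun j => (INR j - (c - 1)) ^ 2)).
  - rewrite IHk, S_INR; ring.
  - intros j _; rewrite S_INR; ring.
Qed.

Lemma binom_chebyshev k q t f : 0 <= q <= 1 ->
  (forall j, (j <= k)%nat -> f j * t ^ 2 <= (INR j - INR k * q) ^ 2) ->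
  binom_expect k q f * t ^ 2 <= INR k * q * (1 - q).
Proof.
  intros Hq Hf.
  rewrite Rmult_comm, <- binom_expect_scal.
  replace (INR k * q * (1 - q))
    with (binom_expect k q (fun j => (INR j - INR k * q) ^ 2))
    by (rewrite binom_expect_sq_dev; ring).
  apply binom_expect_le; [exact Hq|].
  intros j Hj; rewrite Rmult_comm; exact (Hf j Hj).
Qed.

Definition at_least (m j : nat) : R := if (m <=? j)%nat then 1 else 0.

Lemma binom_upper_tail k q m : 0 <= q <= 1 -> INR k * q <= INR m ->
  binom_expect k q (at_least m) * (INR m - INR k * q) ^ 2 <= INR k * q * (1 - q).
Proof.
  intros Hq Hm; apply binom_chebyshev; [exact Hq|]; intros j _.
  unfold at_least; destruct (Nat.leb_spec m j) as [Hj|_].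
  - apply le_INR in Hj; rewrite Rmult_1_l; apply pow_incr; lra.
  - rewrite Rmult_0_l; apply pow2_ge_0.
Qed.

Lemma binom_lower_tail k q m : 0 <= q <= 1 -> INR m - 1 <= INR k * q ->
  (1 - binom_expect k q (at_least m)) * (INR k * q - (INR m - 1)) ^ 2
  <= INR k * q * (1 - q).
Proof.
  intros Hq Hm.
  rewrite <- (binom_expect_1 k q) at 1; rewrite <- binom_expect_minus.
  apply binom_chebyshev; [exact Hq|]; intros j _.
  unfold at_least; destruct (Nat.leb_spec m j) as [_|Hj].
  - rewrite Rminus_diag, Rmult_0_l; apply pow2_ge_0.
  - apply le_INR in Hj; rewrite S_INR in Hj.
    rewrite Rminus_0_r, Rmult_1_l, <- (pow2_abs (INR j - _)).
    apply pow_incr; split; [lra|]; rewrite Rabs_left1; lra.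
Qed.

Lemma continuity_sum_f_R0 (g : nat -> R -> R) n :
  (forall j, continuity (g j)) -> continuity (fun x => sum_f_R0 (fun j => g j x) n).
Proof.
  intros Hg; induction n as [|n IHn]; simpl; [apply Hg|].
  apply continuity_plus; [exact IHn | apply Hg].
Qed.

Lemma F_continuous p k : continuity (F p k).
Proof.
  apply (continuity_sum_f_R0 (fun j x => if ((k + 1) / 2 <=? j)%nat
    then C k j * ((1 - p) * x) ^ j * (1 - (1 - p) * x) ^ (k - j) else 0)).
  intros j; destruct (_ <=? j)%nat.
  - apply derivable_continuous; reg.
  - apply continuity_const; intros x y; reflexivity.
Qed.

Lemma F_binom_expect p k x :
  F p k x = binom_expect k ((1 - p) * x) (at_least ((k + 1) / 2)).
Proof.
  apply sum_eq; intros j Hj; unfold at_least.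
  rewrite C_binom by exact Hj; destruct (_ <=? j)%nat; ring.
Qed.

Lemma F_le_1 p k x : 0 <= (1 - p) * x <= 1 -> F p k x <= 1.
Proof.
  intros Hq; rewrite F_binom_expect.
  apply Rle_trans with (binom_expect k ((1 - p) * x) (fun _ => 1));
    [|rewrite binom_expect_1; apply Rle_refl].
  apply binom_expect_le; [exact Hq|]; intros j _.
  unfold at_least; destruct (_ <=? j)%nat; lra.
Qed.

Lemma INR_half_succ_bounds k : INR k / 2 <= INR ((k + 1) / 2) <= (INR k + 1) / 2.
Proof.
  pose proof (Nat.div_mod_eq (k + 1) 2) as Hdiv.
  pose proof (Nat.mod_upper_bound (k + 1) 2 ltac:(lia)) as Hmod.
  assert (H : (k <= 2 * ((k + 1) / 2) <= k + 1)%nat).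
  { revert Hdiv Hmod; generalize ((k + 1) / 2)%nat ((k + 1) mod 2)%nat; lia. }
  destruct H as [H1 H2]; apply le_INR in H1, H2.
  rewrite mult_INR in H1, H2; rewrite plus_INR in H2.
  simpl (INR 2) in H1, H2; simpl (INR 1) in H2; lra.
Qed.

Lemma F_lt_id k d x : 0 < d <= 1 / 2 -> 1 <= INR k * d ^ 2 -> 0 < x <= 1 ->
  F (1 / 2 + d) k x < x.
Proof.
  intros Hd Hk Hx.
  rewrite F_binom_expect.
  set (q := (1 - (1 / 2 + d)) * x).
  set (m := ((k + 1) / 2)%nat).
  set (E := binom_expect k q (at_least m)).
  assert (Hm : INR k / 2 <= INR m) by apply INR_half_succ_bounds.
  pose proof (pos_INR k) as Hk0.
  assert (Hq : 0 <= q <= x / 2) by (unfold q; nra).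
  assert (Ht : INR k * d <= INR m - INR k * q).
  { assert (0 <= INR k * ((1 / 2 - d) * (1 - x))) by (apply Rmult_le_pos; nra).
    unfold q; nra. }
  assert (Htail : E * (INR m - INR k * q) ^ 2 <= INR k * x / 2).
  { eapply Rle_trans; [apply binom_upper_tail; nra|]. nra. }
  apply Rnot_le_lt; intros HE.
  assert (Hsq : (INR k * d) ^ 2 <= (INR m - INR k * q) ^ 2) by (apply pow_incr; nra).
  assert (Hx2 : x * (INR k * d) ^ 2 <= x * (INR k / 2)) by nra.
  assert (Hkd : INR k * d ^ 2 <= 1 / 2).
  { apply Rmult_le_reg_l with (x * INR k); nra. }
  lra.
Qed.

Lemma F_ge_id_near_1 k d : 0 < d <= 1 / 2 -> 8 <= INR k * d ^ 3 ->
  1 - d / 2 <= F (1 / 2 - d) k (1 - d / 2).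
Proof.
  intros Hd Hk.
  rewrite F_binom_expect.
  set (q := (1 - (1 / 2 - d)) * (1 - d / 2)).
  set (m := ((k + 1) / 2)%nat).
  set (E := binom_expect k q (at_least m)).
  assert (Hm : INR m <= (INR k + 1) / 2) by apply INR_half_succ_bounds.
  pose proof (pos_INR k) as Hk0.
  assert (Hkpos : 0 < INR k).
  { destruct (Rle_lt_or_eq_dec _ _ Hk0) as [Hlt|Heq]; [exact Hlt|].
    rewrite <- Heq, Rmult_0_l in Hk; lra. }
  assert (Hq : 1 / 2 + d / 4 <= q <= 1) by (unfold q; nra).
  assert (Ht : INR k * d / 4 <= INR k * q - (INR m - 1)).
  { assert (0 <= INR k * (q - (1 / 2 + d / 4))) by (apply Rmult_le_pos; lra). nra. }
  assert (Htail : (1 - E) * (INR k * q - (INR m - 1)) ^ 2 <= INR k / 4).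
  { eapply Rle_trans; [apply binom_lower_tail; nra|].
    assert (0 <= INR k * (q - 1 / 2) ^ 2) by (apply Rmult_le_pos; nra). nra. }
  destruct (Rle_or_lt (1 - E) 0) as [HE|HE]; [lra|].
  assert (Hsq : (INR k * d / 4) ^ 2 <= (INR k * q - (INR m - 1)) ^ 2).
  { apply pow_incr; split; [|exact Ht]. apply Rmult_le_pos; [apply Rmult_le_pos|]; lra. }
  assert (Hkd : (1 - E) * (INR k * d ^ 2) <= 4).
  { apply Rmult_le_reg_l with (INR k / 16); [lra|].
    apply Rmult_le_compat_l with (r := 1 - E) in Hsq; [|lra].
    replace (INR k / 16 * ((1 - E) * (INR k * d ^ 2)))
      with ((1 - E) * (INR k * d / 4) ^ 2) by field.
    lra. }
  nra.
Qed.

Lemma fixpoint_between (f : R -> R) a b : continuity f -> a <= b ->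
  a <= f a -> f b <= b -> exists z, a <= z <= b /\ f z = z.
Proof.
  intros Hf Hab Ha Hb.
  destruct (IVT_cor (fun x => f x - x) a b) as [z [Hz Hfz]].
  - apply continuity_minus; [exact Hf | exact (derivable_continuous _ derivable_id)].
  - exact Hab.
  - nra.
  - exists z; split; [exact Hz | lra].
Qed.

Lemma F_fixpoint_near_1 k d : 0 < d <= 1 / 2 -> 8 <= INR k * d ^ 3 ->
  exists x, 1 - d / 2 <= x <= 1 /\ F (1 / 2 - d) k x = x.
Proof.
  intros Hd Hk.
  apply fixpoint_between; [apply F_continuous | lra | apply F_ge_id_near_1; assumption |].
  apply F_le_1; lra.
Qed.

Lemma exactly_n_solutions_pos p k n : (2 <= n)%nat -> exactly_n_solutions p k n ->
  exists x, 0 < x <= 1 /\ F p k x = x.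
Proof.
  intros Hn [l [Hnd [Hlen Hsol]]].
  destruct l as [|a [|b l]]; simpl in Hlen; try lia.
  assert (Hab : a <> b).
  { intros <-; apply NoDup_cons_iff in Hnd; apply (proj1 Hnd); left; reflexivity. }
  destruct (proj1 (Hsol a) (or_introl eq_refl)) as [Ha Hfa].
  destruct (proj1 (Hsol b) (or_intror (or_introl eq_refl))) as [Hb Hfb].
  destruct (Req_dec a 0) as [Ha0|Ha0].
  - exists b; repeat split; [|lra|exact Hfb]. destruct Hb as [[Hb|Hb] _]; congruence.
  - exists a; repeat split; [|lra|exact Hfa]. destruct Ha as [[Ha|Ha] _]; congruence.
Qed.

Lemma is_pstar_le k ps p : is_pstar k ps -> 0 <= p ->
  (forall x, 0 < x <= 1 -> F p k x < x) -> ps <= p.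
Proof.
  intros [_ [Hthree _]] Hp Hlt.
  apply Rnot_lt_le; intros Hps.
  destruct (exactly_n_solutions_pos p k 3 ltac:(lia) (Hthree p (conj Hp Hps)))
    as [x [Hx Hfx]].
  specialize (Hlt x Hx); lra.
Qed.

Lemma is_pstar_ge k ps p : is_pstar k ps -> p <= 1 ->
  (exists x, 0 < x <= 1 /\ F p k x = x) -> p <= ps.
Proof.
  intros [_ [_ [_ Hzero]]] Hp [x [Hx Hfx]].
  apply Rnot_lt_le; intros Hps.
  specialize (Hzero p (conj Hps Hp) x ltac:(lra) Hfx); lra.
Qed.

Lemma is_pstar_near_half k ps d : is_pstar k ps -> 0 < d <= 1 / 4 ->
  8 <= INR k * d ^ 3 -> Rabs (ps - 1 / 2) <= d.
Proof.
  intros Hps Hd Hk.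
  assert (Hk2 : 1 <= INR k * d ^ 2).
  { assert (INR k * d ^ 3 <= INR k * d ^ 2 / 4) by (pose proof (pos_INR k); nra). lra. }
  assert (Hup : ps <= 1 / 2 + d).
  { apply (is_pstar_le k); [exact Hps | lra |].
    intros x Hx; apply F_lt_id; lra. }
  assert (Hlow : 1 / 2 - d <= ps).
  { apply (is_pstar_ge k); [exact Hps | lra |].
    destruct (F_fixpoint_near_1 k d ltac:(lra) Hk) as [x [Hx Hfx]].
    exists x; split; [lra | exact Hfx]. }
  apply Rabs_le; lra.
Qed.

Theorem lemmaA9 (pstar : nat -> R)
  (Hps : forall k : nat, (3 <= k)%nat -> Nat.odd k = true -> is_pstar k (pstar k)) :
  forall eps : R, 0 < eps ->
    exists N : nat, forall k : nat, (N <= k)%nat -> (3 <= k)%nat -> Nat.odd k = true ->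
      Rabs (pstar k - 1 / 2) < eps.
Proof.
  intros eps Heps.
  set (d := Rmin eps (1 / 2) / 2).
  assert (Hd : 0 < d <= 1 / 4) by (unfold d; pose proof (Rmin_r eps (1 / 2));
    pose proof (Rmin_glb_lt eps (1 / 2) 0 Heps ltac:(lra)); lra).
  assert (Hde : d < eps) by (unfold d; pose proof (Rmin_l eps (1 / 2)); lra).
  destruct (INR_unbounded (8 / d ^ 3)) as [N HN].
  exists N; intros k HkN Hk3 Hodd.
  assert (Hk : 8 <= INR k * d ^ 3).
  { apply le_INR in HkN.
    assert (Hd3 : 0 < d ^ 3) by (apply pow_lt; lra).
    apply Rmult_le_reg_r with (/ d ^ 3); [apply Rinv_0_lt_compat, Hd3|].
    rewrite Rmult_assoc, Rinv_r by lra; unfold Rdiv in HN; lra. }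
  pose proof (is_pstar_near_half k (pstar k) d (Hps k Hk3 Hodd) Hd Hk); lra.
Qed.
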